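(* Let $P\subseteq M_{\mathbb{R}}$ be a simplicial reflexive polytope having facets $F$ and $-F$. Let the vertex set of $F$ be $\{e_1,\dots,e_d\}$ and let $e_1^*,\dots,e_d^*$ be the dual $\mathbb{R}$-basis of $N_{\mathbb{R}}$. For $i=1,\dots,d$ let $F_i$ be the unique facet of $P$ with $F_i\cap F=\mathrm{conv}(e_j: j\neq i)$. Let $u=\eta_F$. Let $v$ be a vertex of $P$ with $\langle u,v\rangle=0$, and write $v=\sum_{i=1}^d q_ie_i$ with $q_i\in\mathbb{Q}$. Then for every $i=1,\dots,d$: $$q_i<0\iff q_i=-1\iff v\in F_i,$$ and in this case $e_i^*=\eta_{F_i}-u\in P^*\cap N$. Moreover, there are subsets $I,J\subseteq\{1,\dots,d\}$ with $I\cap J=\emptyset$ and $|I|=|J|$ such that $v=\sum_{j\in J}e_j-\sum_{i\in I}e_i$.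
   Context: $M\cong\mathbb{Z}^d$, $N=\mathrm{Hom}(M,\mathbb{Z})$ with pairing $\langle\cdot,\cdot\rangle$, $M_{\mathbb{R}},N_{\mathbb{R}}$ the real extensions. A Fano polytope is a $d$-dimensional lattice polytope in $M_{\mathbb{R}}$ with $0$ in its interior and primitive vertices; for a facet $F$, $\eta_F\in N_{\mathbb{R}}$ is the unique vector with $\langle\eta_F,x\rangle=-1$ for all $x\in F$. The dual polytope is $P^*=\{x\in N_{\mathbb{R}}:\langle x,y\rangle\ge-1\ \forall y\in P\}$, whose vertices are the $\eta_F$; $P$ is reflexive if $P^*$ is a lattice polytope; simplicial if each facet is a simplex. Note $e_1,\dots,e_d$ need not be a lattice basis. *)

From HB Require Import structures.
From mathcomp Require Import all_boot all_order all_algebra.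
From mathcomp Require Import reals.
Set Implicit Arguments. Unset Strict Implicit. Unset Printing Implicit Defensive.
Import Order.TTheory GRing.Theory Num.Theory.
Local Open Scope ring_scope.

(* M = Z^d sits in M_R = R^d (row vectors); N = Hom(M,Z) is identified with Z^d
   in N_R = R^d, and the pairing <y,x> is the standard dot product. *)
Definition pt (R : realType) (d : nat) := 'rV[R]_d.

Definition pairing (R : realType) (d : nat) (y x : 'rV[R]_d) : R :=
  \sum_(i < d) y 0 i * x 0 i.

Definition lattice_pt (R : realType) (d : nat) (x : 'rV[R]_d) : Prop :=
  forall i, x 0 i \is a Num.int.

Definition primitive (R : realType) (d : nat) (x : 'rV[R]_d) : Prop :=
  lattice_pt x /\ x != 0 /\
  forall (k : nat) (y : 'rV[R]_d), (1 < k)%N -> lattice_pt y -> x <> k%:R *: y.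

Definition conv_on (R : realType) (d n : nat) (p : 'I_n -> 'rV[R]_d)
  (A : pred 'I_n) (x : 'rV[R]_d) : Prop :=
  exists w : 'I_n -> R,
    (forall i, 0 <= w i) /\ (forall i, ~~ A i -> w i = 0) /\
    \sum_(i < n) w i = 1 /\ x = \sum_(i < n) w i *: p i.

Definition conv (R : realType) (d n : nat) (p : 'I_n -> 'rV[R]_d) :=
  conv_on p predT.

Definition aff_indep (R : realType) (d n : nat) (p : 'I_n -> 'rV[R]_d) : Prop :=
  forall c : 'I_n -> R, \sum_(i < n) c i = 0 -> \sum_(i < n) c i *: p i = 0 ->
    forall i, c i = 0.

Definition polytope (R : realType) (d : nat) (P : 'rV[R]_d -> Prop) : Prop :=
  exists n (p : 'I_n -> 'rV[R]_d), forall x, P x <-> conv p x.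

Definition is_vertex (R : realType) (d : nat) (P : 'rV[R]_d -> Prop) (v : 'rV[R]_d) :=
  P v /\ forall y z (t : R), P y -> P z -> 0 < t < 1 ->
    v = t *: y + (1 - t) *: z -> y = v /\ z = v.

Definition zero_interior (R : realType) (d : nat) (P : 'rV[R]_d -> Prop) :=
  exists eps : R, 0 < eps /\ forall x : 'rV[R]_d, (forall i, `|x 0 i| < eps) -> P x.

(* facet: a face (intersection with a supporting hyperplane) of dimension d-1 *)
Definition facet (R : realType) (d : nat) (P F : 'rV[R]_d -> Prop) : Prop :=
  exists (a : 'rV[R]_d) (b : R), a != 0 /\
    (forall x, P x -> b <= pairing a x) /\
    (forall x, F x <-> (P x /\ pairing a x = b)) /\
    exists p : 'I_d -> 'rV[R]_d, (forall i, F (p i)) /\ aff_indep p.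

Definition neg_set (R : realType) (d : nat) (F : 'rV[R]_d -> Prop) :=
  fun x : 'rV[R]_d => F (- x).

(* eta_F : <eta_F, x> = -1 for all x in F (unique for a facet of a Fano polytope) *)
Definition is_eta (R : realType) (d : nat) (F : 'rV[R]_d -> Prop) (eta : 'rV[R]_d) :=
  forall x, F x -> pairing eta x = -1.

Definition dual (R : realType) (d : nat) (P : 'rV[R]_d -> Prop) :=
  fun y : 'rV[R]_d => forall x, P x -> -1 <= pairing y x.

Definition fano (R : realType) (d : nat) (P : 'rV[R]_d -> Prop) : Prop :=
  polytope P /\ zero_interior P /\ (forall v, is_vertex P v -> primitive v).

Definition reflexive_polytope (R : realType) (d : nat) (P : 'rV[R]_d -> Prop) : Prop :=
  fano P /\ forall y, is_vertex (dual P) y -> lattice_pt y.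

Definition simplex (R : realType) (d : nat) (F : 'rV[R]_d -> Prop) : Prop :=
  exists n (p : 'I_n -> 'rV[R]_d), aff_indep p /\ forall x, F x <-> conv p x.

Definition simplicial (R : realType) (d : nat) (P : 'rV[R]_d -> Prop) : Prop :=
  forall F, facet P F -> simplex F.

(* Write [v = sum_i r_i e_i].  The facet [F_i] adjacent to [F] along the ridge
   opposite [e_i] has [eta_(F_i) = u + c_i e_i^*], where [c_i > 0] is an integer
   and [c_i <= 2] because [-e_i] lies in [P].  The integer [<eta_(F_i), v> = c_i r_i]
   is at least [-1], so [r_i < 0] forces [c_i r_i = -1], i.e. [v] lies on [F_i].
   If [c_i = 2], then [F_i] would also contain [-e_i] and the [e_j], [j <> i], and [v]
   would be an affine combination of vertices of the simplex [F_i]; hence [c_i = 1]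
   and [r_i = -1].  That [e_i^* = eta_(F_i) - u] lies in [P^*] is checked on the
   vertices of [P], which are lattice points with [<u, z>] in {-1, 0, 1}.
   The same argument for the facet [-F], whose adjacent facets are found by rotating
   its supporting hyperplane about its ridges, gives [r_i > 0 -> r_i = 1], and
   [sum_i r_i = - <u, v> = 0] balances the two signs. *)

From HB Require Import structures.
From mathcomp Require Import all_boot all_order all_algebra.
From mathcomp Require Import reals.
From mathcomp Require Import lra zify.
Import Order.TTheory GRing.Theory Num.Theory.
Local Open Scope ring_scope.
From Stdlib Require Import Classical.
Set Implicit Arguments. Unset Strict Implicit. Unset Printing Implicit Defensive.

Section Pairing.
Context {R : realType} {d : nat}.
Implicit Types (x y w : 'rV[R]_d).

Lemma pairingC x y : pairing x y = pairing y x.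
Proof. by apply: eq_bigr => i _; rewrite mulrC. Qed.

Lemma pairingDr y x1 x2 : pairing y (x1 + x2) = pairing y x1 + pairing y x2.
Proof. by rewrite /pairing -big_split; apply: eq_bigr => i _; rewrite mxE mulrDr. Qed.

Lemma pairingZr y a x : pairing y (a *: x) = a * pairing y x.
Proof. by rewrite /pairing mulr_sumr; apply: eq_bigr => i _; rewrite mxE mulrCA. Qed.

Lemma pairingNr y x : pairing y (- x) = - pairing y x.
Proof. by rewrite -scaleN1r pairingZr mulN1r. Qed.

Lemma pairing0r y : pairing y 0 = 0.
Proof. by rewrite -(scale0r 0) pairingZr mul0r. Qed.

Lemma pairing_sumr (I : Type) (r : seq I) (Q : pred I) (F : I -> 'rV[R]_d) y :
  pairing y (\sum_(i <- r | Q i) F i) = \sum_(i <- r | Q i) pairing y (F i).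
Proof.
apply: (big_ind2 (fun a b => pairing y a = b)) => [|a1 a2 b1 b2 <- <-|//].
  exact: pairing0r.
by rewrite pairingDr.
Qed.

Lemma pairingDl y1 y2 x : pairing (y1 + y2) x = pairing y1 x + pairing y2 x.
Proof. by rewrite pairingC pairingDr !(pairingC x). Qed.

Lemma pairingZl a y x : pairing (a *: y) x = a * pairing y x.
Proof. by rewrite pairingC pairingZr pairingC. Qed.

Lemma pairingNl y x : pairing (- y) x = - pairing y x.
Proof. by rewrite pairingC pairingNr pairingC. Qed.

Lemma pairingBl y1 y2 x : pairing (y1 - y2) x = pairing y1 x - pairing y2 x.
Proof. by rewrite pairingDl pairingNl. Qed.

Lemma pairing0l x : pairing 0 x = 0.
Proof. by rewrite pairingC pairing0r. Qed.

Lemma pairing_suml (I : Type) (r : seq I) (Q : pred I) (F : I -> 'rV[R]_d) x :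
  pairing (\sum_(i <- r | Q i) F i) x = \sum_(i <- r | Q i) pairing (F i) x.
Proof. by rewrite pairingC pairing_sumr; apply: eq_bigr => i _; rewrite pairingC. Qed.

Lemma pairing_sum_level n (b : 'I_n -> 'rV[R]_d) (c : 'I_n -> R) y :
  (forall k, pairing y (b k) = -1) -> pairing y (\sum_k c k *: b k) = - \sum_k c k.
Proof.
move=> yb; rewrite pairing_sumr -sumrN; apply: eq_bigr => k _.
by rewrite pairingZr yb mulrN1.
Qed.

Lemma pairing_int x y : lattice_pt x -> lattice_pt y -> pairing x y \is a Num.int.
Proof. by move=> hx hy; apply: rpred_sum => i _; apply: rpredM. Qed.

Lemma lattice_ptB x y : lattice_pt x -> lattice_pt y -> lattice_pt (x - y).
Proof. by move=> hx hy i; rewrite !mxE; apply: rpredB. Qed.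

End Pairing.

Section LinearIndependence.
Context {R : realType} {d : nat}.
Implicit Types (x y w : 'rV[R]_d).

Definition lin_indep n (b : 'I_n -> 'rV[R]_d) :=
  forall c : 'I_n -> R, \sum_k c k *: b k = 0 -> forall k, c k = 0.

Lemma lin_indep_pairing_eq0 (b : 'I_d -> 'rV[R]_d) w :
  lin_indep b -> (forall k, pairing w (b k) = 0) -> w = 0.
Proof.
move=> hind hw.
pose B : 'M[R]_d := \matrix_(k, j) b k 0 j.
have rowB k : row k B = b k by apply/rowP => j; rewrite !mxE.
have hu : B \in unitmx.
  rewrite -row_free_unit -kermx_eq0; apply/rowV0P => z /sub_kermxP hz; apply/rowP => k; rewrite mxE.
  by apply: hind k; rewrite -[RHS]hz mulmx_sum_row; apply: eq_bigr => i _; rewrite rowB.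
have hBw : B *m w^T = 0.
  apply/matrixP => k j; rewrite !mxE (ord1 j) -[RHS](hw k) pairingC /pairing.
  by apply: eq_bigr => i _; rewrite !mxE.
by apply: trmx_inj; rewrite trmx0 -(mulKmx hu w^T) hBw mulmx0.
Qed.

Lemma lin_indep_pairing_inj (b : 'I_d -> 'rV[R]_d) w1 w2 :
  lin_indep b -> (forall k, pairing w1 (b k) = pairing w2 (b k)) -> w1 = w2.
Proof.
move=> hb h; apply/eqP; rewrite -subr_eq0; apply/eqP.
by apply: lin_indep_pairing_eq0 hb _ => k; rewrite pairingBl h subrr.
Qed.

Lemma aff_indep_lin_indep n (b : 'I_n -> 'rV[R]_d) : lin_indep b -> aff_indep b.
Proof. by move=> hb c _; apply: hb. Qed.

Lemma lin_indep_level_aff_indep n (b : 'I_n -> 'rV[R]_d) y :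
  (forall k, pairing y (b k) = -1) -> aff_indep b -> lin_indep b.
Proof.
move=> hy hb c hc; apply: (hb c _ hc).
by apply: oppr_inj; rewrite -(pairing_sum_level c hy) hc pairing0r oppr0.
Qed.

Section DualBasis.
Variables (f fs : 'I_d -> 'rV[R]_d).
Hypothesis hfs : forall i j, pairing (fs i) (f j) = (i == j)%:R.

Lemma pairing_dual_sum (r : 'I_d -> R) i : pairing (fs i) (\sum_j r j *: f j) = r i.
Proof.
rewrite pairing_sumr (bigD1 i) //= pairingZr hfs eqxx mulr1 big1 ?addr0 // => j hj.
by rewrite pairingZr hfs eq_sym (negbTE hj) mulr0.
Qed.

Lemma dual_lin_indep : lin_indep f.
Proof. by move=> c hc k; rewrite -(pairing_dual_sum c k) hc pairing0r. Qed.

Lemma lin_indep_replace i x : pairing (fs i) x != 0 ->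
  lin_indep (fun j => if j == i then x else f j).
Proof.
move=> hx c hc.
have coord l : pairing (fs l) (\sum_j c j *: (if j == i then x else f j)) =
    c i * pairing (fs l) x + \sum_(j | j != i) c j * (l == j)%:R.
  rewrite pairing_sumr (bigD1 i) //= eqxx pairingZr; congr (_ + _).
  by apply: eq_bigr => j /negbTE ->; rewrite pairingZr hfs.
have ci : c i = 0.
  move: (coord i); rewrite hc pairing0r big1 => [|j hj]; last by rewrite eq_sym (negbTE hj) mulr0.
  by rewrite addr0 => /esym /eqP; rewrite mulf_eq0 (negbTE hx) orbF => /eqP.
move=> l; have [-> //|hl] := eqVneq l i.
move: (coord l); rewrite hc pairing0r ci mul0r add0r (bigD1 l) //= eqxx mulr1 big1 ?addr0.
  by move/esym.
by move=> j /andP[_ hj]; rewrite eq_sym (negbTE hj) mulr0.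
Qed.

End DualBasis.

End LinearIndependence.

Section RealIntegers.
Variable R : realType.
Implicit Types a b : R.

Lemma intr_lt_le_add1 a b : a \is a Num.int -> b \is a Num.int -> a < b -> a + 1 <= b.
Proof.
move=> /intrP[m ->] /intrP[n ->]; rewrite ltr_int => h.
by rewrite -[1]/(1%:~R) -rmorphD ler_int; lia.
Qed.

Lemma intr_eqN1 a : a \is a Num.int -> -1 <= a -> a < 0 -> a = -1.
Proof. by move=> ha ha1 ha0; have := intr_lt_le_add1 ha (rpred0 _) ha0; lra. Qed.

Lemma intr_eq1 a : a \is a Num.int -> 0 < a -> a < 2 -> a = 1.
Proof.
move=> ha ha0 ha2; have := intr_lt_le_add1 (rpred0 _) ha ha0.
have := intr_lt_le_add1 ha (rpred_nat _ 2) ha2; lra.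
Qed.

End RealIntegers.

Section Convexity.
Context {R : realType} {d : nat}.

Lemma conv_weight_le1 n (w : 'I_n -> R) k :
  (forall l, 0 <= w l) -> \sum_l w l = 1 -> w k <= 1.
Proof.
move=> w0; rewrite (bigD1 k) //= => w1.
have : 0 <= \sum_(l < n | l != k) w l by apply: sumr_ge0.
lra.
Qed.

Lemma conv_weight1 n (w : 'I_n -> R) (p : 'I_n -> 'rV[R]_d) k :
  (forall l, 0 <= w l) -> \sum_l w l = 1 -> w k = 1 -> \sum_l w l *: p l = p k.
Proof.
move=> w0 w1 wk; rewrite (bigD1 k) //= wk scale1r big1 ?addr0 // => l hl.
have rest : \sum_(l | l != k) w l = 0 by move: w1; rewrite (bigD1 k) //= wk; lra.
by rewrite (psumr_eq0P _ rest) ?scale0r.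
Qed.

Lemma conv_weight_gt0 n (w : 'I_n -> R) : \sum_l w l = 1 -> exists k, 0 < w k.
Proof.
move=> w1; apply: NNPP => hn.
have : \sum_l w l <= 0.
  by apply: sumr_le0 => l _; rewrite leNgt; apply/negP => hl; apply: hn; exists l.
by rewrite w1 ler10.
Qed.

Lemma conv_on1 n (p : 'I_n -> 'rV[R]_d) (A : pred 'I_n) k : A k -> conv_on p A (p k).
Proof.
move=> hk; exists (fun l => (l == k)%:R); split; first by move=> l; rewrite ler0n.
split; first by move=> l; apply: contraNeq; rewrite pnatr_eq0 eqb0 negbK => /eqP ->.
split; first by rewrite (bigD1 k) //= eqxx big1 ?addr0 // => l /negbTE ->.
rewrite (bigD1 k) //= eqxx scale1r big1 ?addr0 // => l /negbTE ->.
by rewrite scale0r.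
Qed.

Lemma conv_on_sub n (p : 'I_n -> 'rV[R]_d) (A B : pred 'I_n) x :
  (forall l, A l -> B l) -> conv_on p A x -> conv_on p B x.
Proof.
move=> hAB [w [w0 [wA wx]]]; exists w; split=> //; split=> // l hl.
by apply: wA; apply: contra hl; apply: hAB.
Qed.

Lemma conv_on_ge n (p : 'I_n -> 'rV[R]_d) (A : pred 'I_n) y c x :
  (forall k, A k -> c <= pairing y (p k)) -> conv_on p A x -> c <= pairing y x.
Proof.
move=> hk [w [w0 [wA [w1 ->]]]].
rewrite pairing_sumr -[c]mul1r -w1 mulr_suml; apply: ler_sum => k _.
rewrite pairingZr; have [hA|hA] := boolP (A k); first exact: ler_wpM2l (hk k hA).
by rewrite wA // !mul0r.
Qed.

Lemma conv_on_split n (p : 'I_n -> 'rV[R]_d) (A : pred 'I_n) (w : 'I_n -> R) k :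
  (forall l, 0 <= w l) -> (forall l, ~~ A l -> w l = 0) -> \sum_l w l = 1 -> w k < 1 ->
  exists2 z, conv_on p (predD1 A k) z & \sum_l w l *: p l = w k *: p k + (1 - w k) *: z.
Proof.
move=> w0 wA w1 wk1; have wk0 : 1 - w k != 0 by rewrite subr_eq0 eq_sym lt_eqF.
pose w' l := if l == k then 0 else w l / (1 - w k).
have rest : \sum_(l | l != k) w l = 1 - w k by move: w1; rewrite (bigD1 k) //=; lra.
exists (\sum_l w' l *: p l).
  exists w'; split.
    by move=> l; rewrite /w'; case: eqP => // _; apply: divr_ge0 => //; lra.
  split; first by move=> l /=; rewrite /w' negb_and negbK; case: eqP => //= _ /wA ->; rewrite mul0r.
  split=> //; rewrite (bigD1 k) //= /w' eqxx add0r.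
  transitivity (\sum_(l | l != k) w l / (1 - w k)); first by apply: eq_bigr => l /negbTE ->.
  by rewrite -mulr_suml rest divff.
rewrite scaler_sumr [LHS](bigD1 k) //= [in RHS](bigD1 k) //= /w' eqxx scale0r scaler0 add0r.
congr (_ + _); apply: eq_bigr => l /negbTE ->.
by rewrite scalerA mulrCA divff // mulr1.
Qed.

Lemma conv_on_absorb n (p : 'I_n -> 'rV[R]_d) (A : pred 'I_n) k x :
  conv_on p (predD1 A k) (p k) -> conv_on p A x -> conv_on p (predD1 A k) x.
Proof.
move=> [h [h0 [hA [h1 hk]]]] [w [w0 [wA [w1 ->]]]].
have hkk : h k = 0 by apply: hA; rewrite /= eqxx.
exists (fun l => (if l == k then 0 else w l) + w k * h l); split.
  by move=> l; apply: addr_ge0; [case: eqP | apply: mulr_ge0].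
split.
  move=> l hl; rewrite hA // mulr0 addr0; case: eqP => // /eqP lk.
  by apply: wA; move: hl; rewrite /= lk.
split.
  rewrite big_split /= -mulr_sumr h1 mulr1 (bigD1 k) //= eqxx add0r.
  by move: w1; rewrite (bigD1 k) //= => w1; rewrite -[RHS]w1 addrC; congr (_ + _);
    apply: eq_bigr => l /negbTE ->.
under [RHS]eq_bigr do rewrite scalerDl.
rewrite big_split /=.
have -> : \sum_l (w k * h l) *: p l = w k *: p k.
  by rewrite hk scaler_sumr; apply: eq_bigr => l _; rewrite scalerA.
rewrite [LHS](bigD1 k) //= addrC [X in _ = X + _](bigD1 k) //= eqxx scale0r add0r.
by congr (_ + _); apply: eq_bigr => l /negbTE ->.
Qed.

End Convexity.

Section Vertices.
Context {R : realType} {d : nat}.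
Implicit Types (P G : 'rV[R]_d -> Prop) (x y z : 'rV[R]_d).

Lemma is_vertex_conv G n (s : 'I_n -> 'rV[R]_d) x :
  (forall z, G z <-> conv s z) -> is_vertex G x -> exists k, s k = x.
Proof.
move=> hG [Gx ext]; have [w [w0 [wA [w1 ex]]]] := (hG x).1 Gx.
have [k wk0] := conv_weight_gt0 w1; exists k.
have [wk1|wk1] := eqVneq (w k) 1; first by rewrite ex (conv_weight1 _ w0 w1 wk1).
have lt1 : w k < 1 by rewrite lt_neqAle wk1 conv_weight_le1.
have [z hz ez] := conv_on_split s w0 wA w1 lt1.
have Gz : G z by apply/hG; apply: conv_on_sub hz.
have Gs : G (s k) by apply/hG; apply: conv_on1.
by have [] := ext _ _ (w k) Gs Gz (introT andP (conj wk0 lt1)) (etrans ex ez).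
Qed.

(* [p k] is a proper convex combination of two points of the hull, so its own
   weight in the induced representation is < 1 and can be split off. *)
Lemma conv_on_nonvertex P n (p : 'I_n -> 'rV[R]_d) (A : pred 'I_n) k :
  (forall x, P x <-> conv_on p A x) -> A k -> ~ is_vertex P (p k) ->
  conv_on p (predD1 A k) (p k).
Proof.
move=> hP Ak hnv.
have [y [z [t [Py [Pz [/andP[t0 t1] [ek hne]]]]]]] : exists y z t, P y /\ P z /\ 0 < t < 1 /\
    p k = t *: y + (1 - t) *: z /\ ~ (y = p k /\ z = p k).
  apply: NNPP => hn; apply: hnv; split; first by apply/hP; apply: conv_on1.
  move=> y z t Py Pz ht e; apply: NNPP => hne; apply: hn; by exists y, z, t.
have [a [a0 [aA [a1 ey]]]] := (hP y).1 Py.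
have [b [b0 [bA [b1 ez]]]] := (hP z).1 Pz.
pose g l := t * a l + (1 - t) * b l.
have g0 l : 0 <= g l by apply: addr_ge0; apply: mulr_ge0 => //; lra.
have gA l : ~~ A l -> g l = 0 by move=> hl; rewrite /g aA ?bA // !mulr0 addr0.
have g1 : \sum_l g l = 1 by rewrite big_split /= -!mulr_sumr a1 b1; lra.
have eg : \sum_l g l *: p l = p k.
  rewrite ek ey ez !scaler_sumr -big_split /=; apply: eq_bigr => l _.
  by rewrite /g scalerDl !scalerA.
have gk : g k < 1.
  rewrite lt_neqAle conv_weight_le1 // andbT; apply/eqP => gk1.
  have := conv_weight_le1 k a0 a1; have := conv_weight_le1 k b0 b1.
  move: gk1; rewrite /g => gk1 bk ak.
  have ak1 : a k = 1 by nra.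
  have bk1 : b k = 1 by nra.
  by apply: hne; rewrite ey ez (conv_weight1 _ a0 a1 ak1) (conv_weight1 _ b0 b1 bk1).
have [z' hz' ez'] := conv_on_split p g0 gA g1 gk.
suff -> : p k = z' by [].
apply: (@scalerI _ _ (1 - g k)); first by rewrite subr_eq0 eq_sym lt_eqF.
by apply/eqP; rewrite scalerBl scale1r subr_eq addrC -ez' eg.
Qed.

(* Krein-Milman for polytopes: discard non-extreme generators one at a time. *)
Lemma polytope_vertex_hull P n (p : 'I_n -> 'rV[R]_d) (A : pred 'I_n) :
  (forall x, P x <-> conv_on p A x) ->
  exists B : pred 'I_n, (forall k, B k -> is_vertex P (p k)) /\
    forall x, P x <-> conv_on p B x.
Proof.
move=> hP; have [m hA] := ubnP #|A|; elim: m => // m IH in A hA hP *.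
have [allv|nv] := classic (forall k, A k -> is_vertex P (p k)); first by exists A.
have [k hk] := not_all_ex_not _ _ nv.
have [Ak hnv] := imply_to_and _ _ hk.
apply: (IH (predD1 A k)).
  by move: hA; rewrite (cardD1 k) [k \in A]Ak.
move=> x; split=> [/hP|]; first exact: conv_on_absorb (conv_on_nonvertex hP Ak hnv).
by move=> hx; apply/hP; apply: conv_on_sub hx => l /andP[].
Qed.

Lemma ge_on_vertices P n (p : 'I_n -> 'rV[R]_d) y c :
  (forall x, P x <-> conv p x) -> (forall z, is_vertex P z -> c <= pairing y z) ->
  forall x, P x -> c <= pairing y x.
Proof.
move=> hp hv x /[dup] Px; have [B [hB hPB]] := polytope_vertex_hull hp.
by move/hPB; apply: conv_on_ge => k /hB /hv.
Qed.

End Vertices.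

Section Facets.
Context {R : realType} {d : nat}.
Implicit Types (P G : 'rV[R]_d -> Prop) (x y z : 'rV[R]_d).

Lemma is_vertex_face P G a b z :
  (forall x, P x -> b <= pairing a x) -> (forall x, G x <-> P x /\ pairing a x = b) ->
  is_vertex G z -> is_vertex P z.
Proof.
move=> hb hG [Gz ext]; have [Pz az] := (hG z).1 Gz.
split=> // x w t Px Pw /andP[t0 t1] ez.
have := hb x Px; have := hb w Pw.
have : pairing a z = t * pairing a x + (1 - t) * pairing a w.
  by rewrite ez pairingDr !pairingZr.
rewrite az => hz hw hx.
have ax : pairing a x = b by nra.
have aw : pairing a w = b by nra.
by apply: ext ez; [apply/hG | apply/hG | apply/andP].
Qed.

Lemma is_vertex_neg G z : is_vertex G z -> is_vertex (neg_set G) (- z).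
Proof.
move=> [Gz ext]; split; first by rewrite /neg_set opprK.
move=> x w t Gx Gw ht ez.
have [ex ew] : - x = z /\ - w = z.
  by apply: ext Gx Gw ht _; rewrite -[z]opprK ez opprD -!scalerN.
by split; [rewrite -ex | rewrite -ew]; rewrite opprK.
Qed.

Lemma dual_vertex_tight P y (b : 'I_d -> 'rV[R]_d) :
  dual P y -> lin_indep b -> (forall k, P (b k)) -> (forall k, pairing y (b k) = -1) ->
  is_vertex (dual P) y.
Proof.
move=> hy hb Pb yb; split=> // y1 y2 t hy1 hy2 /andP[t0 t1] ey.
have tight k : pairing y1 (b k) = -1 /\ pairing y2 (b k) = -1.
  have := hy1 _ (Pb k); have := hy2 _ (Pb k).
  have := yb k; rewrite ey pairingDl !pairingZl.
  by move=> h h2 h1; split; nra.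
by split; apply: (lin_indep_pairing_inj hb) => k; rewrite yb; case: (tight k).
Qed.

Lemma facet_tight P y (b : 'I_d -> 'rV[R]_d) : (0 < d)%N ->
  dual P y -> lin_indep b -> (forall k, P (b k)) -> (forall k, pairing y (b k) = -1) ->
  facet P (fun x => P x /\ pairing y x = -1).
Proof.
move=> d_gt0 hy hb Pb yb; exists y, (-1); split.
  by apply/eqP => y0; have := yb (Ordinal d_gt0); rewrite y0 pairing0l; lra.
split=> //; split=> //.
by exists b; split; [move=> k; split | apply: aff_indep_lin_indep].
Qed.

(* As [P 0], the supporting inequality [b <= pairing a x] of the facet is a
   positive multiple of [-1 <= pairing y x]. *)
Lemma facet_eta P G y : facet P G -> P 0 -> is_eta G y ->
  [/\ dual P y, is_vertex (dual P) y & forall x, G x <-> P x /\ pairing y x = -1].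
Proof.
move=> [a [b [a0 [hab [hG [p [Gp hp]]]]]]] P0 hy.
have yp k : pairing y (p k) = -1 by apply/hy/Gp.
have Pp k : P (p k) /\ pairing a (p k) = b by apply/hG/Gp.
have lin := lin_indep_level_aff_indep yp hp.
have ea : a = - b *: y.
  by apply: (lin_indep_pairing_inj lin) => k; rewrite pairingZl yp (Pp k).2; lra.
have b_lt0 : b < 0.
  rewrite lt_neqAle; have := hab 0 P0; rewrite pairing0r => ->; rewrite andbT.
  by apply: contra a0 => /eqP b0; rewrite ea b0 oppr0 scale0r.
have hpa x : pairing a x = - b * pairing y x by rewrite ea pairingZl.
have hd : dual P y by move=> x /hab; rewrite hpa; nra.
split=> //; first exact: dual_vertex_tight hd lin (fun k => (Pp k).1) yp.
move=> x; rewrite hG hpa; split=> -[Px h]; split=> //; last by rewrite h; lra.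
have /eqP : b * (pairing y x + 1) = 0 by lra.
by rewrite mulf_eq0 lt_eqF //= addr_eq0 => /eqP.
Qed.

End Facets.

Section SimplexFace.
Context {R : realType} {d : nat}.

(* The vertices of [P] in [G] are vertices of the simplex, hence affinely
   independent; the coefficients [s] sum to 1 because [G] lies in [y = -1]. *)
Lemma simplex_face_vertex_not_comb (P G : 'rV[R]_d -> Prop) y v m
    (p : 'I_m -> 'rV[R]_d) (s : 'I_m -> R) :
  simplex G -> (forall x, G x <-> P x /\ pairing y x = -1) ->
  is_vertex P v -> G v -> (forall j, is_vertex P (p j)) -> (forall j, G (p j)) ->
  (forall j, p j != v) -> v != \sum_j s j *: p j.
Proof.
move=> [n [g [aff hg]]] hG hv Gv hp Gp pv; apply/eqP => ev.
have vertG z : is_vertex P z -> G z -> exists k, g k = z.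
  move=> [_ ext] Gz; apply: (is_vertex_conv hg); split=> // x1 x2 t G1 G2.
  by apply: ext; [exact: ((hG x1).1 G1).1 | exact: ((hG x2).1 G2).1].
have [k0 gk0] := vertG v hv Gv.
pose kp j := odflt k0 [pick k | g k == p j].
have gkp j : g (kp j) = p j.
  rewrite /kp; case: pickP => [k /eqP //|none] /=.
  by have [k gk] := vertG _ (hp j) (Gp j); have := none k; rewrite gk eqxx.
have kp_neq j : kp j != k0 by apply: contraNneq (pv j) => kpj; rewrite -gkp kpj gk0.
have s1 : \sum_j s j = 1.
  have yp j : pairing y (p j) = -1 by case/hG: (Gp j).
  by apply: oppr_inj; rewrite -(pairing_sum_level s yp) -ev; case/hG: Gv.
have part (V : nmodType) (F : 'I_m -> V) :
    \sum_j F j = \sum_k \sum_(j | kp j == k) F j by rewrite (partition_big kp predT).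
pose c k := \sum_(j | kp j == k) s j - (k == k0)%:R.
have c0 : \sum_k c k = 0.
  rewrite sumrB -part s1 (bigD1 k0) //= eqxx big1 ?addr0 ?subrr //.
  by move=> k /negbTE ->.
have cg0 : \sum_k c k *: g k = 0.
  have sum_v : \sum_k (\sum_(j | kp j == k) s j) *: g k = v.
    rewrite ev (part _ (fun j => s j *: p j)); apply: eq_bigr => k _.
    by rewrite scaler_suml; apply: eq_bigr => j /eqP <-; rewrite gkp.
  under eq_bigr do rewrite scalerBl.
  rewrite sumrB sum_v (bigD1 k0) //= eqxx scale1r gk0 big1 ?addr0 ?subrr // => k /negbTE ->.
  by rewrite scale0r.
have := aff c c0 cg0 k0; rewrite /c eqxx big_pred0 ?sub0r => [|j]; last first.
  exact/negbTE/kp_neq.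
by move/eqP; rewrite oppr_eq0 oner_eq0.
Qed.

End SimplexFace.

Section AdjacentFacetCoord.
Context {R : realType} {d : nat}.
Variables (P G : 'rV[R]_d -> Prop) (f fs : 'I_d -> 'rV[R]_d) (w y v : 'rV[R]_d).
Variables (s : 'I_d -> R) (c : R) (i : 'I_d).
Hypotheses (hfs : forall k j, pairing (fs k) (f j) = (k == j)%:R)
  (hwf : forall j, pairing w (f j) = -1)
  (vertex_lattice : forall z, is_vertex P z -> lattice_pt z)
  (hf : forall j, is_vertex P (f j)) (hNf : forall j, is_vertex P (- f j))
  (hv : is_vertex P v) (hwv : pairing w v = 0) (hvs : v = \sum_j s j *: f j)
  (hy : y = w + c *: fs i) (c_gt0 : 0 < c) (hyP : dual P y) (hylat : lattice_pt y)
  (hG : simplex G) (hGy : forall x, G x <-> P x /\ pairing y x = -1).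

Let yE x : pairing y x = pairing w x + c * pairing (fs i) x.
Proof. by rewrite hy pairingDl pairingZl. Qed.

Let yf j : j != i -> pairing y (f j) = -1.
Proof. by move=> ji; rewrite yE hwf hfs eq_sym (negbTE ji) mulr0 addr0. Qed.

Let yNfi : pairing y (- f i) = 1 - c.
Proof. by rewrite pairingNr yE hwf hfs eqxx mulr1 opprD opprK. Qed.

Let yv : pairing y v = c * s i.
Proof. by rewrite yE hwv hvs pairing_dual_sum // add0r. Qed.

(* If [c = 2], the face cut out by [y] contains [v], [-f i] and the [f j],
   [j != i], and [v] is an affine combination of the latter. *)
Let c_neq2 : pairing y v = -1 -> c != 2.
Proof.
move=> yv1; apply/eqP => c2.
pose p j := if j == i then - f i else f j.
pose s' j := if j == i then - s i else s j.
have Gv : G v by apply/hGy; split=> //; case: hv.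
have Gp j : G (p j).
  apply/hGy; rewrite /p; case: eqP => [_|/eqP ji]; last by split; [case: (hf j) | exact: yf].
  by split; [case: (hNf i) | rewrite yNfi c2; lra].
have pv j : p j != v.
  apply/negP => /eqP /(congr1 (pairing w)); rewrite hwv /p.
  by case: eqP => _; rewrite ?pairingNr hwf; lra.
have hp j : is_vertex P (p j) by rewrite /p; case: eqP.
have /eqP := simplex_face_vertex_not_comb s' hG hGy hv Gv hp Gp pv; apply.
rewrite hvs; apply: eq_bigr => j _; rewrite /s' /p.
by case: eqP => [->|_] //; rewrite scalerN scaleNr opprK.
Qed.

Lemma adjacent_coord_lt0 : s i < 0 -> s i = -1 /\ c = 1.
Proof.
move=> s_lt0.
have yv1 : pairing y v = -1.
  apply: intr_eqN1; first exact: pairing_int hylat (vertex_lattice hv).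
    by apply: hyP; case: hv.
  by rewrite yv pmulr_rlt0.
have c1 : c = 1.
  apply: intr_eq1 => //; last first.
    by rewrite lt_neqAle c_neq2 //=; have := hyP (proj1 (hNf i)); rewrite yNfi; lra.
  have -> : c = pairing y (f i) + 1 by rewrite yE hwf hfs eqxx mulr1; lra.
  exact: rpredD (pairing_int hylat (vertex_lattice (hf i))) (rpred1 _).
by split=> //; move: yv1; rewrite yv c1 mul1r.
Qed.

End AdjacentFacetCoord.

(* Rotating the supporting hyperplane [w = -1] of a facet about its ridge
   [conv (f j, j != i)] until it meets a generator yields the adjacent facet. *)
Section AdjacentFacet.
Context {R : realType} {d : nat}.
Variables (P : 'rV[R]_d -> Prop) (n : nat) (p : 'I_n -> 'rV[R]_d).
Variables (f fs : 'I_d -> 'rV[R]_d) (w : 'rV[R]_d) (i : 'I_d).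
Hypotheses (hP : forall x, P x <-> conv p x)
  (hfs : forall k j, pairing (fs k) (f j) = (k == j)%:R)
  (hw : dual P w) (hwf : forall j, pairing w (f j) = -1)
  (hPf : forall j, P (f j)) (hPNf : P (- f i))
  (hbase : forall x, P x -> pairing w x = -1 -> 0 <= pairing (fs i) x).

Local Notation g k := (- pairing (fs i) (p k)).
Local Notation h k := (1 + pairing w (p k)).

Let Pp k : P (p k).
Proof. by apply/hP; apply: conv_on1. Qed.

Let h_ge0 k : 0 <= h k.
Proof. by have := hw (Pp k); lra. Qed.

Let exists_g_gt0 : exists k, 0 < g k.
Proof.
apply: NNPP => hn; have : 0 <= pairing (fs i) (- f i).
  apply: (conv_on_ge _ ((hP _).1 hPNf)) => k _; rewrite leNgt; apply/negP => hk.
  by apply: hn; exists k; rewrite oppr_gt0.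
by rewrite pairingNr hfs eqxx oppr_ge0 ler10.
Qed.

Lemma rotation_dual t : 0 <= t -> (forall k, 0 < g k -> t * g k <= h k) ->
  dual P (w + t *: fs i).
Proof.
move=> t0 ht x /hP; apply: conv_on_ge => k _; rewrite pairingDl pairingZl.
have [gk|gk] := leP (g k) 0; last by have := ht k gk; lra.
by have := h_ge0 k; have := mulr_ge0_le0 t0 gk; lra.
Qed.

Lemma rotation_tight t k : 0 < g k -> t * g k = h k -> dual P (w + t *: fs i) ->
  is_vertex (dual P) (w + t *: fs i) /\ facet P (fun x => P x /\ pairing (w + t *: fs i) x = -1).
Proof.
move=> gk tgh hy; pose b j := if j == i then p k else f j.
have lin : lin_indep b by apply: (lin_indep_replace hfs); rewrite -oppr_eq0 lt0r_neq0.
have Pb j : P (b j) by rewrite /b; case: eqP.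
have yb j : pairing (w + t *: fs i) (b j) = -1.
  rewrite pairingDl pairingZl /b; case: eqP => [_|/eqP ji]; first lra.
  by rewrite hwf hfs eq_sym (negbTE ji) mulr0 addr0.
split; first exact: dual_vertex_tight hy lin Pb yb.
by apply: facet_tight hy lin Pb yb; apply: leq_ltn_trans (ltn_ord i).
Qed.

Lemma adjacent_facet : exists2 t, 0 < t &
  is_vertex (dual P) (w + t *: fs i) /\ facet P (fun x => P x /\ pairing (w + t *: fs i) x = -1).
Proof.
have [k0 gk0] := exists_g_gt0.
have [k gk hmin] := arg_minP (P := fun k => 0 < g k) (fun k => h k / g k) gk0.
have h_gt0 : 0 < h k.
  rewrite lt_neqAle h_ge0 andbT; apply/eqP => h0.
  have wpk : pairing w (p k) = -1 by lra.
  by have := hbase (Pp k) wpk; lra.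
exists (h k / g k); first exact: divr_gt0.
apply: (rotation_tight gk); first by rewrite divfK ?lt0r_neq0.
apply: rotation_dual => [|j gj]; first exact/ltW/divr_gt0.
by rewrite -ler_pdivlMr //; apply: hmin.
Qed.

End AdjacentFacet.

Section SignedSums.
Variable R : numDomainType.

Lemma sum_signed_scale (V : lmodType R) n (s : 'I_n -> R) (f : 'I_n -> V) :
  (forall i, s i = -1 \/ s i = 0 \/ s i = 1) ->
  \sum_i s i *: f i = \sum_(j in [set i | s i == 1]) f j - \sum_(i in [set i | s i == -1]) f i.
Proof.
move=> s3; have N1_neq1 : (-1 == 1 :> R) = false by rewrite lt_eqF // (lt_trans (ltrN10 R) ltr01).
rewrite [X in _ = X - _]big_mkcond [X in _ = _ - X]big_mkcond -sumrB /=.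
apply: eq_bigr => i _; rewrite !inE.
case: (s3 i) => [|[|]] ->; rewrite ?eqxx ?N1_neq1 ?(eq_sym 1) ?N1_neq1.
- by rewrite scaleN1r sub0r.
- by rewrite scale0r eq_sym oner_eq0 eq_sym oppr_eq0 oner_eq0 subrr.
- by rewrite scale1r subr0.
Qed.

Lemma signed_subsets (V : lmodType R) n (s : 'I_n -> R) (f : 'I_n -> V) :
  (forall i, s i = -1 \/ s i = 0 \/ s i = 1) -> \sum_i s i = 0 ->
  exists I J : {set 'I_n}, [/\ [disjoint I & J], #|I| = #|J| &
    \sum_i s i *: f i = \sum_(j in J) f j - \sum_(i in I) f i].
Proof.
move=> s3 s0; exists [set i | s i == -1], [set i | s i == 1]; split.
- rewrite disjoints_subset; apply/subsetP => i; rewrite !inE => /eqP ->.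
  by rewrite lt_eqF // (lt_trans (ltrN10 R) ltr01).
- have := sum_signed_scale (fun _ => 1 : R^o) s3.
  rewrite !sumr_const (eq_bigr _ (fun i _ => mulr1 (s i))) s0 => /eqP.
  by rewrite eq_sym subr_eq0 eqr_nat => /eqP.
- exact: sum_signed_scale.
Qed.

End SignedSums.

Section EquatorVertex.
Context {R : realType} {d : nat}.
Variables (P F : 'rV[R]_d -> Prop) (e estar : 'I_d -> 'rV[R]_d).
Variables (Fi : 'I_d -> 'rV[R]_d -> Prop) (etaFi : 'I_d -> 'rV[R]_d) (u v : 'rV[R]_d).
Variable r : 'I_d -> R.
Hypotheses (hrefl : reflexive_polytope P) (hsimp : simplicial P)
  (hF : facet P F) (hnF : facet P (neg_set F))
  (hvF : forall x, is_vertex F x <-> exists i, x = e i)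
  (hest : forall i j, pairing (estar i) (e j) = (i == j)%:R)
  (hFi : forall i, facet P (Fi i) /\
     forall x, (Fi i x /\ F x) <-> conv_on e (fun j => j != i) x)
  (heta : forall i, is_eta (Fi i) (etaFi i)) (hu : is_eta F u)
  (hv : is_vertex P v) (huv : pairing u v = 0) (hvr : v = \sum_i r i *: e i).

Local Notation c i := (pairing (etaFi i) (e i) + 1).

Let P0 : P 0.
Proof.
by have [_ [[eps [eps0 hball]] _]] := hrefl.1; apply: hball => i; rewrite mxE normr0.
Qed.

Let vertex_lattice z : is_vertex P z -> lattice_pt z.
Proof. by move=> hz; have [_ [_ /(_ z hz) []]] := hrefl.1. Qed.

Let dual_vertex_lattice y : is_vertex (dual P) y -> lattice_pt y.
Proof. exact: hrefl.2. Qed.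

Let hu_char := facet_eta hF P0 hu.

Let hNu_char : [/\ dual P (- u), is_vertex (dual P) (- u) &
  forall x, neg_set F x <-> P x /\ pairing (- u) x = -1].
Proof.
by apply: facet_eta hnF P0 _ => x hx; rewrite pairingNl -pairingNr; apply: hu.
Qed.

Let Fe j : F (e j).
Proof. by have [] := (hvF (e j)).2 (ex_intro _ j erefl). Qed.

Let ue j : pairing u (e j) = -1.
Proof. exact: hu (Fe j). Qed.

Let vertex_e j : is_vertex P (e j).
Proof.
have [uD _ uF] := hu_char.
by apply: is_vertex_face uD uF _; apply/hvF; exists j.
Qed.

Let vertex_Ne j : is_vertex P (- e j).
Proof.
have [NuD _ NuF] := hNu_char.
by apply: is_vertex_face NuD NuF _; apply/is_vertex_neg/hvF; exists j.
Qed.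

Let etaFi_char i := facet_eta (hFi i).1 P0 (@heta i).

Let etaFiE i : etaFi i = u + c i *: estar i.
Proof.
apply: (lin_indep_pairing_inj (dual_lin_indep hest)) => j.
rewrite pairingDl pairingZl hest ue; have [<-|ji] := eqVneq i j; first by rewrite mulr1; lra.
rewrite mulr0 addr0; apply: heta; suff [] : Fi i (e j) /\ F (e j) by [].
by apply/(hFi i).2/conv_on1; rewrite eq_sym.
Qed.

Let c_gt0 i : 0 < c i.
Proof.
have [etaD _ etaF] := etaFi_char i.
have c_ge0 : 0 <= c i by have := etaD _ (proj1 (vertex_e i)); lra.
rewrite lt_neqAle c_ge0 andbT; apply/eqP => c0.
have /(hFi i).2 [w [_ [wA [_ ew]]]] : Fi i (e i) /\ F (e i).
  by split=> //; apply/etaF; split; [case: (vertex_e i) | lra].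
have := congr1 (pairing (estar i)) ew; rewrite hest eqxx pairing_dual_sum // wA ?eqxx //.
by move/eqP; rewrite oner_eq0.
Qed.

Let estar_ge0 j x : F x -> 0 <= pairing (estar j) x.
Proof.
have [_ _ uF] := hu_char; have [etaD _ _] := etaFi_char j.
move=> /uF [Px ux]; have := etaD _ Px; rewrite etaFiE pairingDl pairingZl ux.
by have := c_gt0 j; nra.
Qed.

Let uE : u = - \sum_j estar j.
Proof.
apply: (lin_indep_pairing_inj (dual_lin_indep hest)) => k.
rewrite ue pairingNl pairing_suml (bigD1 k) //= hest eqxx big1 ?addr0 // => j.
by rewrite hest => /negbTE ->.
Qed.

Let polytopeP : exists n (p : 'I_n -> 'rV[R]_d), forall x, P x <-> conv p x.
Proof. by case: hrefl => -[]. Qed.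

Lemma coord_lt0 i : r i < 0 -> r i = -1 /\ c i = 1.
Proof.
have [etaD etaV etaF] := etaFi_char i.
exact: (adjacent_coord_lt0 hest ue vertex_lattice vertex_e vertex_Ne hv huv hvr (etaFiE i)
  (c_gt0 i) etaD (dual_vertex_lattice etaV) (hsimp (hFi i).1) etaF).
Qed.

Lemma coord_gt0 i : 0 < r i -> r i = 1.
Proof.
move=> r_gt0; have [n [p hp]] := polytopeP; have [NuD _ NuF] := hNu_char.
have hfs k j : pairing (- estar k) (- e j) = (k == j)%:R by rewrite pairingNl pairingNr opprK.
have Nuf j : pairing (- u) (- e j) = -1 by rewrite pairingNl pairingNr opprK.
have PNe j : P (- e j) by case: (vertex_Ne j).
have PNNe : P (- - e i) by rewrite opprK; case: (vertex_e i).
have base x : P x -> pairing (- u) x = -1 -> 0 <= pairing (- estar i) x.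
  by move=> Px ux; rewrite pairingNl -pairingNr; apply/estar_ge0/NuF.
have [t t_gt0 [yV yF]] := adjacent_facet hp hfs NuD Nuf PNe PNNe base.
have NNe j : is_vertex P (- - e j) by rewrite opprK.
have Nuv : pairing (- u) v = 0 by rewrite pairingNl huv oppr0.
have hvN : v = \sum_j - r j *: - e j by rewrite hvr; apply: eq_bigr => j _; rewrite scaleNr scalerN opprK.
have [] := adjacent_coord_lt0 hfs Nuf vertex_lattice vertex_Ne NNe hv Nuv hvN erefl t_gt0
  (proj1 yV) (dual_vertex_lattice yV) (hsimp yF) (fun x => iff_refl _).
  by rewrite oppr_lt0.
by move=> ri _; rewrite -[r i]opprK ri opprK.
Qed.

Lemma coord_eqN1_iff i : r i = -1 <-> Fi i v.
Proof.
have [_ _ etaF] := etaFi_char i.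
have etav : pairing (etaFi i) v = c i * r i.
  by rewrite {1}etaFiE pairingDl pairingZl huv hvr pairing_dual_sum // add0r.
split=> [ri | /etaF [_ ev]].
  have [_ c1] : r i = -1 /\ c i = 1 by apply: coord_lt0; rewrite ri ltrN10.
  by apply/etaF; split; [case: hv | rewrite etav c1 ri mul1r].
have [ri _] : r i = -1 /\ c i = 1.
  by apply: coord_lt0; rewrite -(pmulr_rlt0 _ (c_gt0 i)) -etav ev ltrN10.
exact: ri.
Qed.

Lemma estar_dual i : c i = 1 -> dual P (estar i).
Proof.
move=> c1; have [n [p hp]] := polytopeP; apply: (ge_on_vertices hp) => z hz.
have [_ uV _] := hu_char; have [NuD _ NuF] := hNu_char; have [etaD _ _] := etaFi_char i.
have Pz : P z by case: hz.
have := etaD _ Pz; rewrite {1}etaFiE pairingDl pairingZl c1 mul1r => ez.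
have [uz_le0|uz_gt0] := leP (pairing u z) 0; first lra.
have uz1 : pairing u z = 1.
  apply: intr_eq1 (pairing_int (dual_vertex_lattice uV) (vertex_lattice hz)) uz_gt0 _.
  by have := NuD _ Pz; rewrite pairingNl; lra.
have FNz : F (- z) by apply/NuF; rewrite pairingNl uz1.
have : pairing (estar i) (- z) <= \sum_j pairing (estar j) (- z).
  by rewrite (bigD1 i) //= lerDl; apply: sumr_ge0 => j _; apply: estar_ge0.
rewrite -pairing_suml.
have -> : \sum_j estar j = - u by rewrite uE opprK.
by rewrite pairingNl !pairingNr uz1; lra.
Qed.

Lemma coord_sum0 : \sum_i r i = 0.
Proof.
by apply: oppr_inj; rewrite -(pairing_sum_level r ue) -hvr huv oppr0.
Qed.

Lemma equator_vertex_coord i :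
  [/\ r i < 0 <-> r i = -1, r i = -1 <-> Fi i v, r i = -1 \/ r i = 0 \/ r i = 1 &
     r i < 0 -> [/\ estar i = etaFi i - u, dual P (estar i) & lattice_pt (estar i)]].
Proof.
split; first by split=> [/coord_lt0 []|->] //; rewrite ltrN10.
- exact: coord_eqN1_iff.
- case: (ltgtP (r i) 0) => [/coord_lt0 []|/coord_gt0|]; by [left | right; right | right; left].
move=> /coord_lt0 [_ c1]; have [_ uV _] := hu_char; have [_ etaV _] := etaFi_char i.
have estarE : estar i = etaFi i - u by rewrite [etaFi i in RHS]etaFiE c1 scale1r addrC addKr.
split=> //; first exact: estar_dual.
by rewrite estarE; apply: lattice_ptB; apply: dual_vertex_lattice.
Qed.

End EquatorVertex.

Theorem lemma3p1 (R : realType) (d : nat) (P F : 'rV[R]_d -> Prop)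
  (e estar : 'I_d -> 'rV[R]_d) (Fi : 'I_d -> 'rV[R]_d -> Prop)
  (etaFi : 'I_d -> 'rV[R]_d) (u v : 'rV[R]_d) (q : 'I_d -> rat) :
  reflexive_polytope P -> simplicial P ->
  facet P F -> facet P (neg_set F) ->
  injective e -> (forall x, is_vertex F x <-> exists i, x = e i) ->
  (forall i j, pairing (estar i) (e j) = (i == j)%:R) ->
  (forall i, facet P (Fi i) /\
     forall x, (Fi i x /\ F x) <-> conv_on e (fun j => j != i) x) ->
  (forall i, is_eta (Fi i) (etaFi i)) ->
  is_eta F u ->
  is_vertex P v -> pairing u v = 0 ->
  v = \sum_(i < d) ratr (q i) *: e i ->
  (forall i,
     (q i < 0 <-> q i = -1) /\ (q i = -1 <-> Fi i v) /\
     (q i < 0 -> estar i = etaFi i - u /\ dual P (estar i) /\ lattice_pt (estar i))) /\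
  exists I J : {set 'I_d}, [disjoint I & J] /\ #|I| = #|J| /\
    v = \sum_(j in J) e j - \sum_(i in I) e i.
Proof.
move=> hrefl hsimp hF hnF _ hvF hest hFi heta hu hv huv hvq.
have coord := equator_vertex_coord hrefl hsimp hF hnF hvF hest hFi heta hu hv huv hvq.
have ltq i : (q i < 0) = (ratr (q i) < 0 :> R) by rewrite ltrq0.
have eqq i : q i = -1 <-> ratr (q i) = -1 :> R.
  by split=> [->|h]; [rewrite rmorphN1 | apply: (fmorph_inj (@ratr R)); rewrite rmorphN1].
split=> [i|].
  have [lt0 eqN1 _ hestar] := coord i.
  rewrite ltq !eqq; split=> //; split=> // /hestar [h1 h2 h3].
  by split; [|split].
have sum0 := coord_sum0 hvF hu huv hvq.
have trich i := let: And4 _ _ h _ := coord i in h.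
have [I [J [dIJ cIJ sIJ]]] := signed_subsets e trich sum0.
by exists I, J; rewrite hvq.
Qed.
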